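(* Let $m\ge 2$, $d_1,\dots,d_m\ge 2$, and let $\rho$ be a density matrix on $\mathbb{C}^{d_1}\otimes\cdots\otimes\mathbb{C}^{d_m}$. For each $i=1,\dots,m$ let $\mathcal{P}^{(i)}=\{P^{(i)}_j\}_{j=1}^{d_i^2}$ be a general SIC-POVM on $\mathbb{C}^{d_i}$ with parameter $a_i$. Let $d=\min\{d_1^2,\dots,d_m^2\}$ and define $$J(\rho)=\max_{\sigma_1,\dots,\sigma_m}\sum_{j=1}^{d}\mathrm{Tr}\Big[\Big(\bigotimes_{i=1}^m P^{(i)}_{\sigma_i(j)}\Big)\rho\Big],$$ where the maximum runs over all tuples of injective maps $\sigma_i:\{1,\dots,d\}\to\{1,\dots,d_i^2\}$, $i=1,\dots,m$. If $\rho$ is fully separable, then $$J(\rho)\le \min_{1\le i\neq k\le m}\sqrt{\frac{a_id_i^2+1}{d_i(d_i+1)}}\,\sqrt{\frac{a_kd_k^2+1}{d_k(d_k+1)}}.$$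
   Context: A general SIC-POVM on $\mathbb{C}^{n}$ with parameter $a$ is a set of $n^2$ positive semidefinite operators $\{P_\alpha\}_{\alpha=1}^{n^2}$ on $\mathbb{C}^{n}$ such that $\sum_{\alpha=1}^{n^2}P_\alpha=I$, $\mathrm{Tr}(P_\alpha^2)=a$ for all $\alpha$, and $\mathrm{Tr}(P_\alpha P_\beta)=\frac{1-na}{n(n^2-1)}$ for all $\alpha\neq\beta$; here $\frac{1}{n^3}<a\le\frac{1}{n^2}$. A density matrix on $\mathbb{C}^{d_1}\otimes\cdots\otimes\mathbb{C}^{d_m}$ is fully separable if it is a convex combination of product states $\rho_1\otimes\cdots\otimes\rho_m$. *)

(* Complex numbers: an arbitrary numClosedFieldType C
   (e.g. algC, or the complex numbers). *)
From HB Require Import structures.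
From mathcomp Require Import all_boot all_order all_algebra.
Set Implicit Arguments. Unset Strict Implicit. Unset Printing Implicit Defensive.
Import Order.TTheory GRing.Theory Num.Theory.
Local Open Scope ring_scope.

Section Defs.
Variable C : numClosedFieldType.

Definition adjmx m n (A : 'M[C]_(m, n)) : 'M[C]_(n, m) := (map_mx Num.conj A)^T.

Definition psdmx n (A : 'M[C]_n) : Prop :=
  adjmx A = A /\ forall v : 'rV[C]_n, 0 <= (v *m A *m adjmx v) 0 0.

Definition density n (A : 'M[C]_n) : Prop := psdmx A /\ \tr A = 1.

Definition gen_SIC_POVM n (P : 'I_(n ^ 2) -> 'M[C]_n) (a : C) : Prop :=
  [/\ (forall j, psdmx (P j)),
      \sum_j P j = 1%:M,
      (forall j, \tr (P j *m P j) = a),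
      (forall j k, j != k ->
         \tr (P j *m P k) = (1 - n%:R * a) / (n%:R * (n%:R ^+ 2 - 1))) &
      1 / n%:R ^+ 3 < a <= 1 / n%:R ^+ 2].

(* The computational basis of C^{d_1} (x) ... (x) C^{d_m} is indexed by the
   finite type of tuples (x_i)_i with x_i < d i; we fix the ordering given by
   enum_val, so operators on the tensor product are 'M[C]_#|tidx d|. *)
Definition tidx (m : nat) (d : 'I_m -> nat) : finType :=
  {dffun forall i : 'I_m, 'I_(d i)}.

Definition tensmx (m : nat) (d : 'I_m -> nat) (A : forall i, 'M[C]_(d i))
  : 'M[C]_#|tidx d| :=
  \matrix_(x, y) \prod_(i < m)
     A i (@enum_val (tidx d) (mem predT) x i) (@enum_val (tidx d) (mem predT) y i).

Definition fully_separable (m : nat) (d : 'I_m -> nat) (rho : 'M[C]_#|tidx d|)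
  : Prop :=
  exists (K : nat) (w : 'I_K -> C) (s : 'I_K -> forall i : 'I_m, 'M[C]_(d i)),
    [/\ forall k, 0 <= w k,
        \sum_k w k = 1,
        forall k i, density (s k i) &
        rho = \sum_k w k *: tensmx (s k)].

End Defs.

(* d = min_i d_i^2 (for m >= 1; the neutral element is an upper bound of
   all the terms, so it is never the result) *)
Definition dmin (m : nat) (d : 'I_m -> nat) : nat :=
  \big[minn/ (\sum_(i < m) d i ^ 2)%N]_(i < m) (d i ^ 2)%N.

From HB Require Import structures.
From mathcomp Require Import all_boot all_order all_algebra.
From mathcomp Require Import ring zify.
Import Order.TTheory GRing.Theory Num.Theory.
Local Open Scope ring_scope.

(* For a product state [s_1 (x) ... (x) s_m] the trace against a product of
   POVM elements factorizes into the local values [x_l(t) = Tr (P^(l)_t s_l)],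
   which are real with [|x_l(t)| <= 1].  Dropping all factors except those of
   parties [i] and [k], Cauchy-Schwarz reduces the claim to the local bound
   [sum_t x_l(t)^2 <= (a n^2 + 1) / (n (n + 1))].  This follows from
   [Tr (s^2) <= 1] by comparing [s] with its Hilbert-Schmidt projection onto the
   span of the SIC-POVM, whose Gram matrix [(a - b) I + b J] ([b] being the
   off-diagonal overlap) is explicitly invertible.  Mixtures of product states are handled by linearity. *)

Lemma prod_sum_dffun (R : comPzSemiRingType) (I : finType) (T_ : I -> finType)
    (F : forall i, T_ i -> R) :
  \prod_i \sum_(t : T_ i) F i t = \sum_(x : {dffun forall i, T_ i}) \prod_i F i (x i).
Proof.
pose P_ i := [ffun t : T_ i => F i t].
transitivity (\prod_i \sum_(t : T_ i) P_ i t).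
  by apply: eq_bigr => i _; apply: eq_bigr => t _; rewrite ffunE.
under eq_bigr do rewrite (big_tag (fun i t => P_ i t)).
rewrite bigA_distr_big_dep -big_fprod.
rewrite (reindex (@fprod_of_dffun I T_)); last first.
  by exists (@dffun_of_fprod I T_) => x _;
    [rewrite fprod_of_dffunK | rewrite dffun_of_fprodK].
apply: eq_bigr => x _; apply: eq_bigr => i _.
by rewrite /fprod_of_dffun fprodE ffunE.
Qed.

Lemma sum_delta_mull {R : pzSemiRingType} {I : finType} (i : I) (F : I -> R) :
  \sum_p (p == i)%:R * F p = F i.
Proof.
rewrite (bigD1 i) //= eqxx mul1r big1 ?addr0 // => p /negPf->.
by rewrite mul0r.
Qed.

Lemma mxtrace_mulE (R : pzSemiRingType) (m n : nat) (A : 'M[R]_(m, n)) (B : 'M[R]_(n, m)) :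
  \tr (A *m B) = \sum_i \sum_j A i j * B j i.
Proof. by apply: eq_bigr => i _; rewrite mxE. Qed.

Lemma mxtrace_tensmx_mul (C : numClosedFieldType) (m : nat) (d : 'I_m -> nat)
    (A B : forall i, 'M[C]_(d i)) :
  \tr (tensmx A *m tensmx B) = \prod_i \tr (A i *m B i).
Proof.
transitivity (\sum_(x : 'I_#|tidx d|) \sum_(y < #|tidx d|) \prod_i
    (A i (enum_val x i) (enum_val y i) * B i (enum_val y i) (enum_val x i))).
  rewrite mxtrace_mulE; apply: eq_bigr => x _; apply: eq_bigr => y _.
  by rewrite !mxE big_split.
rewrite -(big_enum_val (A := mem predT) (fun x : tidx d => \sum_(y < #|tidx d|)
    \prod_i (A i (x i) (enum_val y i) * B i (enum_val y i) (x i)))) /=.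
under eq_bigr do rewrite -(big_enum_val (A := mem predT) (fun y : tidx d =>
    \prod_i (A i (_ i) (y i) * B i (y i) (_ i)))) /=.
under [RHS]eq_bigr do rewrite mxtrace_mulE.
rewrite prod_sum_dffun; apply: eq_bigr => x _.
by rewrite prod_sum_dffun.
Qed.

Section HermitianMatrices.
Context {C : numClosedFieldType} {n : nat}.
Implicit Types (A B M Q S : 'M[C]_n) (v : 'rV[C]_n).

Lemma adjmxE m p (A : 'M[C]_(m, p)) i j : adjmx A i j = (A j i)^*.
Proof. by rewrite !mxE. Qed.

Lemma hermitian_conj_entry {M} : adjmx M = M -> forall i j, (M i j)^* = M j i.
Proof. by move=> HM i j; rewrite -adjmxE HM. Qed.

Lemma adjmxB A B : adjmx (A - B) = adjmx A - adjmx B.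
Proof. by apply/matrixP => i j; rewrite !(adjmxE, mxE) rmorphB. Qed.

Lemma adjmx_real_comb {I : finType} {c : I -> C} {Q : I -> 'M[C]_n} :
    (forall u, c u \is Num.real) -> (forall u, adjmx (Q u) = Q u) ->
  adjmx (\sum_u c u *: Q u) = \sum_u c u *: Q u.
Proof.
move=> c_real Q_herm; apply/matrixP => i j; rewrite adjmxE !summxE rmorph_sum.
apply: eq_bigr => u _; rewrite !mxE rmorphM /= conj_Creal //.
by rewrite hermitian_conj_entry.
Qed.

Lemma mxtrace_herm_mul_real {A B} :
  adjmx A = A -> adjmx B = B -> \tr (A *m B) \is Num.real.
Proof.
move=> HA HB; apply/CrealP; rewrite !mxtrace_mulE rmorph_sum exchange_big.
apply: eq_bigr => i _; rewrite rmorph_sum; apply: eq_bigr => j _.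
by rewrite rmorphM /= !hermitian_conj_entry // mulrC.
Qed.

Lemma mxtrace_herm_sq_ge0 M : adjmx M = M -> 0 <= \tr (M *m M).
Proof.
move=> HM; rewrite mxtrace_mulE; apply: sumr_ge0 => i _; apply: sumr_ge0 => j _.
by rewrite -(hermitian_conj_entry HM i j) mul_conjC_ge0.
Qed.

(* Pythagoras for the Hilbert-Schmidt inner product: [Q] is orthogonal to [S - Q]. *)
Lemma mxtrace_herm_proj_le {S Q} : adjmx S = S -> adjmx Q = Q ->
  \tr (Q *m Q) = \tr (Q *m S) -> \tr (Q *m S) <= \tr (S *m S).
Proof.
move=> HS HQ QQ_QS; have := mxtrace_herm_sq_ge0 (S - Q).
rewrite adjmxB HS HQ => /(_ erefl).
rewrite mulmxBl !mulmxBr !raddfB /= [\tr (S *m Q)]mxtrace_mulC QQ_QS.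
by rewrite subrr addr0 subr_ge0.
Qed.
Lemma psdmx_form2 {A} (i j : 'I_n) (x y : C) : psdmx A ->
  0 <= x * x^* * A i i + x * y^* * A i j + y * x^* * A j i + y * y^* * A j j.
Proof.
have pair_sum (u w : C) (F : 'I_n -> C) :
    \sum_p (u * (p == i)%:R + w * (p == j)%:R) * F p = u * F i + w * F j.
  rewrite -(sum_delta_mull i F) -(sum_delta_mull j F) !mulr_sumr -big_split /=.
  by apply: eq_bigr => p _; ring.
pose v : 'rV[C]_n := \row_p (x * (p == i)%:R + y * (p == j)%:R).
have vA q : (v *m A) 0 q = x * A i q + y * A j q.
  by rewrite mxE -(pair_sum x y (A^~ q)); apply: eq_bigr => p _; rewrite mxE.
have adj_v q : adjmx v q 0 = x^* * (q == i)%:R + y^* * (q == j)%:R.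
  by rewrite adjmxE mxE rmorphD /= !rmorphM /= !conjC_nat.
case=> _ /(_ v); rewrite mxE.
under eq_bigr do rewrite vA adj_v mulrC.
by rewrite pair_sum; congr (0 <= _); ring.
Qed.

Lemma psdmx_diag_ge0 {A} i : psdmx A -> 0 <= A i i.
Proof.
by move/(psdmx_form2 i i 1 0); rewrite conjC0 conjC1 !(mul0r, mulr0, addr0) !mul1r.
Qed.

Lemma psdmx_normK_entry_le A (i j : 'I_n) : psdmx A -> `|A i j| ^+ 2 <= A i i * A j j.
Proof.
move=> A_psd; have [A_herm _] := A_psd.
have ge0E (u w : C) : 0 <= u -> u = w -> 0 <= w by move=> ? <-.
set r := A i j; set al := A i i; set be := A j j.
have Aji : A j i = r^* by rewrite hermitian_conj_entry.
have al_ge0 : 0 <= al := psdmx_diag_ge0 i A_psd.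
have be_ge0 : 0 <= be := psdmx_diag_ge0 j A_psd.
have [al_conj be_conj] := (geC0_conj al_ge0, geC0_conj be_ge0).
rewrite normCK -subr_ge0; set de := al * be - r * r^*.
have q_be : 0 <= be * de.
  apply: ge0E (psdmx_form2 i j be (- r) A_psd) _.
  by rewrite -/al -/be -/r Aji rmorphN /= be_conj /de; ring.
have q_al : 0 <= al * de.
  apply: ge0E (psdmx_form2 j i al (- r^*) A_psd) _.
  by rewrite -/al -/be -/r Aji rmorphN /= conjCK al_conj /de; ring.
have q_r : 0 <= al + r * r^* * (be - 2).
  apply: ge0E (psdmx_form2 i j 1 (- r) A_psd) _.
  by rewrite -/al -/be -/r Aji rmorphN /= conjC1; ring.
have [be_gt0 | ] := boolP (0 < be); first by rewrite -(pmulr_rge0 _ be_gt0).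
rewrite lt_def be_ge0 andbT negbK => /eqP be0.
have [al_gt0 | ] := boolP (0 < al); first by rewrite -(pmulr_rge0 _ al_gt0).
rewrite lt_def al_ge0 andbT negbK => /eqP al0.
move: q_r; rewrite /de al0 be0 mul0r !sub0r add0r mulrN !oppr_ge0.
by rewrite pmulr_lle0 ?ltr0n.
Qed.

Lemma density_tr_sq_le1 {A} : density A -> \tr (A *m A) <= 1.
Proof.
move=> [A_psd trA1]; have [A_herm _] := A_psd.
rewrite mxtrace_mulE -trA1 -[X in _ <= X]mul1r -{1}trA1 /mxtrace mulr_suml.
apply: ler_sum => i _; rewrite mulr_sumr; apply: ler_sum => j _.
rewrite -(hermitian_conj_entry A_herm i j) -normCK mulrC [A j j * _]mulrC.
exact: psdmx_normK_entry_le.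
Qed.

End HermitianMatrices.

Definition sic_bound {C : numClosedFieldType} (n : nat) (a : C) : C :=
  (a * n%:R ^+ 2 + 1) / (n%:R * (n%:R + 1)).

Section GeneralSIC.
Context {C : numClosedFieldType} {n : nat} {P : 'I_(n ^ 2) -> 'M[C]_n} {a : C}.
Hypotheses (n_gt1 : (1 < n)%N) (P_sic : gen_SIC_POVM P a).

Local Notation N := (n%:R : C).
Let b : C := (1 - N * a) / (N * (N ^+ 2 - 1)).

Let N_gt1 : 1 < N. Proof. by rewrite ltr1n. Qed.
Let N_gt0 : 0 < N. Proof. exact: lt_trans ltr01 N_gt1. Qed.
Let N2B1_gt0 : 0 < N ^+ 2 - 1. Proof. by rewrite subr_gt0 exprn_egt1. Qed.
Let NB1_neq0 : N + 1 != 0. Proof. by rewrite lt0r_neq0 ?addr_gt0. Qed.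

Lemma sic_param_gt0 : 0 < a.
Proof.
have [_ _ _ _ /andP[a_gt _]] := P_sic.
by apply: lt_trans a_gt; rewrite divr_gt0 ?exprn_gt0.
Qed.

Let a_real : a \is Num.real. Proof. exact: gtr0_real sic_param_gt0. Qed.

Let b_real : b \is Num.real.
Proof. by rewrite !(rpredM, rpredV, rpredB, rpredX, rpred1, rpred_nat). Qed.

Let sic_gapE : N * (a - b) = 1 - b * N ^+ 3.
Proof. by rewrite /b; field; rewrite !lt0r_neq0. Qed.

Let sic_gap_gt0 : 0 < a - b.
Proof.
have [_ _ _ _ /andP[a_gt _]] := P_sic.
have -> : a - b = (a * N ^+ 3 - 1) / (N * (N ^+ 2 - 1)).
  by rewrite /b; field; rewrite !lt0r_neq0.
rewrite divr_gt0 ?mulr_gt0 // subr_gt0 -ltr_pdivrMr ?exprn_gt0 //.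
Qed.

Lemma mxtrace_sic_comb (c : 'I_(n ^ 2) -> C) t :
  \tr (P t *m \sum_u c u *: P u) = (a - b) * c t + b * \sum_u c u.
Proof.
have [_ _ P_sq P_cross _] := P_sic.
rewrite mulmx_sumr raddf_sum /= (bigD1 t) //= -scalemxAr mxtraceZ P_sq.
under eq_bigr => u ut do rewrite -scalemxAr mxtraceZ P_cross 1?eq_sym // -/b.
by rewrite -mulr_suml [in RHS](bigD1 t) //=; ring.
Qed.

Lemma sic_sum_sq_tr_le {S} : density S -> \sum_t `|\tr (P t *m S)| ^+ 2 <= sic_bound n a.
Proof.
move=> S_dens; have [[S_herm _] trS1] := S_dens.
have [P_psd P_sum _ _ _] := P_sic.
have P_herm u : adjmx (P u) = P u by case: (P_psd u).
set p := fun t => \tr (P t *m S).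
have p_real t : p t \is Num.real := mxtrace_herm_mul_real (P_herm t) S_herm.
have sum_p : \sum_t p t = 1 by rewrite /p -raddf_sum -mulmx_suml P_sum mul1mx.
have gap_neq0 : a - b != 0 by rewrite lt0r_neq0 ?sic_gap_gt0.
(* Coefficients of the projection of [S] onto the span of the [P t]. *)
pose c t := (p t - b * N) / (a - b).
have c_real t : c t \is Num.real.
  apply: rpred_div; last exact: rpredB.
  by apply: rpredB; [exact: p_real | apply: rpredM; [exact: b_real | exact: rpred_nat]].
have sum_c : \sum_t c t = N.
  rewrite -mulr_suml sumrB sum_p sumr_const card_ord -[b * N *+ _]mulr_natr natrX.
  by apply: (canLR (mulfK gap_neq0)); rewrite sic_gapE; ring.
set Q := \sum_u c u *: P u.
have trPQ t : \tr (P t *m Q) = p t.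
  by rewrite mxtrace_sic_comb sum_c /c; field.
have trQ_comb X : \tr (Q *m X) = \sum_u c u * \tr (P u *m X).
  by rewrite mulmx_suml raddf_sum /=; apply: eq_bigr => u _; rewrite -scalemxAl mxtraceZ.
have sum_cp_le1 : \sum_t c t * p t <= 1.
  apply: le_trans (density_tr_sq_le1 S_dens).
  have <- : \tr (Q *m S) = \sum_t c t * p t by rewrite trQ_comb.
  apply: mxtrace_herm_proj_le S_herm (adjmx_real_comb c_real P_herm) _.
  by rewrite !trQ_comb; under eq_bigr do rewrite trPQ.
have sum_cpE : \sum_t c t * p t = (\sum_t p t ^+ 2 - b * N) / (a - b).
  have cpE t : c t * p t = p t ^+ 2 / (a - b) - b * N / (a - b) * p t.
    by rewrite /c; field.
  by rewrite (eq_bigr _ (fun t _ => cpE t)) sumrB -mulr_suml -mulr_sumr sum_p mulr1 mulrBl.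
rewrite (eq_bigr (fun t => p t ^+ 2)) => [|t _]; last exact: real_normK (p_real t).
move: sum_cp_le1; rewrite sum_cpE ler_pdivrMr ?sic_gap_gt0 // mul1r lerBlDr.
move/le_trans; apply; rewrite le_eqVlt; apply/orP; left; apply/eqP.
by rewrite /b /sic_bound; field; rewrite NB1_neq0 !lt0r_neq0.
Qed.

Lemma sic_bound_gt0 : 0 < sic_bound n a.
Proof.
have aN2_gt0 : 0 < a * N ^+ 2 by rewrite mulr_gt0 ?exprn_gt0 ?sic_param_gt0.
by rewrite /sic_bound divr_gt0 ?mulr_gt0 ?addr_gt0.
Qed.

Lemma sic_bound_le1 : sic_bound n a <= 1.
Proof.
have [_ _ _ _ /andP[_ a_le]] := P_sic.
have aN2_le1 : a * N ^+ 2 <= 1 by rewrite -ler_pdivlMr ?exprn_gt0.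
rewrite /sic_bound ler_pdivrMr ?mulr_gt0 ?addr_gt0 // mul1r.
apply: le_trans (lerD aN2_le1 (lexx 1)) _.
by rewrite -[1 + 1]/(2%:R) natr1 -natrM ler_nat; nia.
Qed.

Lemma sic_norm_tr_le1 {S} t : density S -> `|\tr (P t *m S)| <= 1.
Proof.
move=> S_dens; rewrite -(expr_le1 (n := 2)) //.
apply: le_trans (le_trans _ (sic_sum_sq_tr_le S_dens)) sic_bound_le1.
by rewrite (bigD1 t) //= lerDl sumr_ge0 // => u _; rewrite exprn_ge0.
Qed.

End GeneralSIC.

Lemma norm_prod_le_pair {C : numDomainType} {I : finType} (f : I -> C) {i k : I} :
  (forall l, `|f l| <= 1) -> i != k -> `|\prod_l f l| <= `|f i| * `|f k|.
Proof.
move=> f_le1 ik; rewrite normr_prod (bigD1 i) //= (bigD1 k) 1?eq_sym //=.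
rewrite mulrA -[X in _ <= X]mulr1 ler_wpM2l ?mulr_ge0 //.
by apply: prodr_ile1 => l _; rewrite normr_ge0 f_le1.
Qed.

Lemma sum_inj_le {R : numDomainType} {I J : finType} (f : J -> R) (g : I -> J) :
  injective g -> (forall t, 0 <= f t) -> \sum_i f (g i) <= \sum_t f t.
Proof.
move=> g_inj f_ge0.
rewrite -(big_imset f (in2W g_inj)) /=; set G := (X in \sum_(j in X) _ <= _).
by rewrite [X in _ <= X](bigID [in G]) /= lerDl sumr_ge0.
Qed.

(* Cauchy-Schwarz, in the form [2 s t u v <= t^2 u^2 + s^2 v^2] summed over [i]. *)
Lemma sum_mul_le_sqrtC {C : numClosedFieldType} {I : finType} (u v : I -> C) (A B : C) :
    (forall i, 0 <= u i) -> (forall i, 0 <= v i) -> 0 < A -> 0 < B ->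
    \sum_i u i ^+ 2 <= A -> \sum_i v i ^+ 2 <= B ->
  \sum_i u i * v i <= sqrtC A * sqrtC B.
Proof.
move=> u_ge0 v_ge0 A_gt0 B_gt0 uA vB.
have [s_gt0 t_gt0] : 0 < sqrtC A /\ 0 < sqrtC B by rewrite !sqrtC_gt0.
set s := sqrtC A in s_gt0 *; set t := sqrtC B in t_gt0 *.
have [sA tB] : s ^+ 2 = A /\ t ^+ 2 = B by rewrite !sqrtCK.
have st2_gt0 : 0 < 2 * s * t by rewrite !mulr_gt0.
have amgm i : 2 * s * t * (u i * v i) <= t ^+ 2 * u i ^+ 2 + s ^+ 2 * v i ^+ 2.
  have -> : t ^+ 2 * u i ^+ 2 + s ^+ 2 * v i ^+ 2
            = 2 * s * t * (u i * v i) + (t * u i - s * v i) ^+ 2 by ring.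
  have tu_sv_real : t * u i - s * v i \is Num.real.
    by apply: realB; apply: realM; apply: ger0_real;
      [exact: ltW | exact: u_ge0 | exact: ltW | exact: v_ge0].
  by rewrite lerDl real_exprn_even_ge0.
rewrite -(ler_pM2l st2_gt0) mulr_sumr (le_trans (ler_sum _ (fun i _ => amgm i))) //.
rewrite big_split /= -!mulr_sumr.
have [t2_ge0 s2_ge0] := (exprn_ge0 2 (ltW t_gt0), exprn_ge0 2 (ltW s_gt0)).
apply: le_trans (lerD (ler_wpM2l t2_ge0 uA) (ler_wpM2l s2_ge0 vB)) _.
by rewrite -sA -tB [X in _ <= X](_ : _ = t ^+ 2 * s ^+ 2 + s ^+ 2 * t ^+ 2) //; ring.
Qed.

Lemma sum_tr_tensmx_product_le {C : numClosedFieldType} {m : nat} {d : 'I_m -> nat}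
    {P : forall l : 'I_m, 'I_(d l ^ 2) -> 'M[C]_(d l)} {a : 'I_m -> C}
    {s : forall l, 'M[C]_(d l)} {J : finType} {sigma : forall l, J -> 'I_(d l ^ 2)}
    {i k : 'I_m} :
    (forall l, 1 < d l)%N -> (forall l, gen_SIC_POVM (P l) (a l)) ->
    (forall l, density (s l)) -> (forall l, injective (sigma l)) -> i != k ->
  \sum_j \tr (tensmx (fun l => P l (sigma l j)) *m tensmx s)
    <= sqrtC (sic_bound (d i) (a i)) * sqrtC (sic_bound (d k) (a k)).
Proof.
move=> d_gt1 P_sic s_dens sigma_inj ik.
pose x l t := \tr (P l t *m s l).
have x_real l t : x l t \is Num.real.
  apply: mxtrace_herm_mul_real; last by case: (s_dens l) => -[].
  by have [/(_ t) []] := P_sic l.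
have x_le1 l t : `|x l t| <= 1 := sic_norm_tr_le1 (d_gt1 l) (P_sic l) t (s_dens l).
have local_bound l : \sum_j `|x l (sigma l j)| ^+ 2 <= sic_bound (d l) (a l).
  apply: le_trans (sic_sum_sq_tr_le (d_gt1 l) (P_sic l) (s_dens l)).
  exact: sum_inj_le (sigma_inj l) (fun t => exprn_ge0 2 (normr_ge0 _)).
apply: le_trans (_ : _ <= \sum_j `|x i (sigma i j)| * `|x k (sigma k j)|) _.
  apply: ler_sum => j _; rewrite mxtrace_tensmx_mul.
  apply: le_trans (norm_prod_le_pair (fun l => x l (sigma l j)) (fun l => x_le1 l _) ik).
  exact: real_ler_norm (rpred_prod _ (fun l _ => x_real l (sigma l j))).
apply: sum_mul_le_sqrtC => //; exact: sic_bound_gt0.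
Qed.

Theorem theorem4 (C : numClosedFieldType) (m : nat) (d : 'I_m -> nat)
  (P : forall i : 'I_m, 'I_(d i ^ 2) -> 'M[C]_(d i)) (a : 'I_m -> C)
  (rho : 'M[C]_#|tidx d|) :
  (2 <= m)%N ->
  (forall i, 2 <= d i)%N ->
  density rho ->
  (forall i, gen_SIC_POVM (P i) (a i)) ->
  fully_separable rho ->
  forall sigma : forall i : 'I_m, 'I_(dmin d) -> 'I_(d i ^ 2),
    (forall i, injective (sigma i)) ->
    forall i k : 'I_m, i != k ->
      \sum_(j < dmin d) \tr (tensmx (fun l => P l (sigma l j)) *m rho)
      <= sqrtC ((a i * (d i)%:R ^+ 2 + 1) / ((d i)%:R * ((d i)%:R + 1)))
         * sqrtC ((a k * (d k)%:R ^+ 2 + 1) / ((d k)%:R * ((d k)%:R + 1))).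
Proof.
(* [2 <= m] follows from [i != k], and [density rho] from separability. *)
move=> _ d_gt1 _ P_sic [K [w [s [w_ge0 sum_w1 s_dens ->]]]] sigma sigma_inj i k ik.
rewrite (eq_bigr (fun j => \sum_q w q *
    \tr (tensmx (fun l => P l (sigma l j)) *m tensmx (s q)))) => [|j _]; last first.
  by rewrite mulmx_sumr raddf_sum /=; apply: eq_bigr => q _; rewrite -scalemxAr mxtraceZ.
rewrite exchange_big /=; set B := sqrtC _ * sqrtC _; rewrite -[B]mul1r -sum_w1 mulr_suml.
apply: ler_sum => q _; rewrite -mulr_sumr ler_wpM2l //.
exact: sum_tr_tensmx_product_le.
Qed.
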